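(* Let $N \ge 3$, let $0 \le z_1 < \dots < z_N < 1$ and let $\mu = \sum_{i=1}^N N^{-1}\delta_{z_i}$ be the uniform discrete probability distribution on $[0,1]$. Then the eigenvalues of the $\mu$-Laplacian $\Delta^\mu$ are $\lambda_l = -2N^2 + 2N^2\cos(2\pi l/N)$ for $l\in\{0,\dots,N-1\}$, with corresponding eigenfunctions $f_l \in \mathscr D^2_\mu$ given by: (1) $f_0$ is the constant function with value $1$; (2) for $0 < l < N/2$: $f_l|_{[0,z_1]\cup(z_N,1]} = 0$ and $f_l|_{(z_j,z_{j+1}]} = \operatorname{Im}\big(e^{2\pi\mathbf i\, jl/N}\big)$ for $j\in\{1,\dots,N-1\}$; (3) for $N/2 \le l \le N-1$: $f_l|_{[0,z_1]\cup(z_N,1]} = 1$ and $f_l|_{(z_j,z_{j+1}]} = \operatorname{Re}\big(e^{2\pi\mathbf i\, jl/N}\big)$ for $j\in\{1,\dots,N-1\}$.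
   Context: $\delta_z$ is the Dirac measure at $z$; $\mathbf i$ is the imaginary unit. $L^2_\mu$ is the space of $\mu$-a.e. classes of real square-integrable functions on $[0,1]$ with inner product $\langle f,g\rangle_\mu = \sum_{i=1}^N \alpha_i f(z_i)g(z_i)$ (here $\alpha_i = 1/N$). $\mathscr D^1_\mu$ is the set of functions $f$ on $[0,1]$ for which there is $f' \in L^2_\mu$ with $f(0)=f(1)$ and $f(x) = f(0) + \int \mathbf 1_{[0,x)} f'\,d\mu$ for all $x\in[0,1]$ (with $[0,0)=\emptyset$); then $\nabla^\mu f := f'$, explicitly $\nabla^\mu f(z_n) = (f(z_{n+1})-f(z_n))/\alpha_n$ for $n<N$ and $\nabla^\mu f(z_N) = (f(z_1)-f(z_N))/\alpha_N$. Every class of $L^2_\mu$ has a representative in $\mathscr D^1_\mu$. The energy form is $\mathcal E(f,g) = \langle \nabla^\mu f, \nabla^\mu g\rangle_\mu$. A function $f \in \mathscr D^1_\mu$ belongs to $\mathscr D^2_\mu$ if there is $h \in L^2_\mu$ with $\mathcal E(f,g) = -\langle h, g\rangle_\mu$ for all $g\in\mathscr D^1_\mu$, and then $\Delta^\mu f := h$. *)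

From HB Require Import structures.
From mathcomp Require Import all_boot all_order all_algebra.
From mathcomp Require Import all_classical all_reals all_analysis.
Set Implicit Arguments. Unset Strict Implicit. Unset Printing Implicit Defensive.
Import Order.TTheory GRing.Theory Num.Theory.
Local Open Scope ring_scope.

(* Atoms z 1 < ... < z N (1-indexed, as in the paper), each of mass
   alpha N = 1/N.  Functions on [0,1] are modelled as R -> R; only their
   values on [0,1] matter. *)
Section Defs.
Variable R : realType.

Definition alpha (N : nat) : R := (N%:R)^-1.

Definition ipmu (N : nat) (z : nat -> R) (f g : R -> R) : R :=
  \sum_(1 <= i < N.+1) alpha N * f (z i) * g (z i).

(* f is in D^1_mu : there is f' with f(0) = f(1) and
   f(x) = f(0) + int 1_[0,x) f' dmu  for all x in [0,1];
   the integral against mu = sum_i alpha_i delta_{z_i} is written out. *)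
Definition D1mu (N : nat) (z : nat -> R) (f : R -> R) : Prop :=
  exists f' : R -> R, f 0 = f 1 /\
    forall x : R, 0 <= x <= 1 ->
      f x = f 0 + \sum_(1 <= i < N.+1)
                    alpha N * (if (0 <= z i) && (z i < x) then f' (z i) else 0).

Definition gradmu (N : nat) (z : nat -> R) (f : R -> R) (n : nat) : R :=
  if (n < N)%N then (f (z n.+1) - f (z n)) / alpha N
  else (f (z 1) - f (z N)) / alpha N.

Definition energy (N : nat) (z : nat -> R) (f g : R -> R) : R :=
  \sum_(1 <= n < N.+1) alpha N * gradmu N z f n * gradmu N z g n.

(* f is in D^2_mu and Delta^mu f = h (as classes in L^2_mu) *)
Definition laplacian_is (N : nat) (z : nat -> R) (f h : R -> R) : Prop :=
  D1mu N z f /\ forall g, D1mu N z g -> energy N z f g = - ipmu N z h g.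

(* f is an eigenfunction of Delta^mu with eigenvalue lam:
   f in D^2_mu, Delta^mu f = lam f in L^2_mu, and f <> 0 in L^2_mu. *)
Definition eigenfunction (N : nat) (z : nat -> R) (f : R -> R) (lam : R) : Prop :=
  laplacian_is N z f (fun x => lam * f x) /\
  exists i, (1 <= i <= N)%N /\ f (z i) != 0.

Definition lambda (N l : nat) : R :=
  - 2 * N%:R ^+ 2 + 2 * N%:R ^+ 2 * cos (2 * pi * l%:R / N%:R).

(* The description (1)-(3) of f_l on [0,1].
   Im(e^{2 pi i j l / N}) = sin(2 pi j l / N), Re(...) = cos(2 pi j l / N). *)
Definition eigf_spec (N : nat) (z : nat -> R) (l : nat) (f : R -> R) : Prop :=
  if l == 0%N then (forall x : R, 0 <= x <= 1 -> f x = 1)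
  else if (2 * l < N)%N then
    (forall x : R, (0 <= x <= z 1) \/ (z N < x <= 1) -> f x = 0) /\
    (forall j : nat, (1 <= j <= N.-1)%N -> forall x : R, z j < x <= z j.+1 ->
        f x = sin (2 * pi * (j * l)%:R / N%:R))
  else
    (forall x : R, (0 <= x <= z 1) \/ (z N < x <= 1) -> f x = 1) /\
    (forall j : nat, (1 <= j <= N.-1)%N -> forall x : R, z j < x <= z j.+1 ->
        f x = cos (2 * pi * (j * l)%:R / N%:R)).

End Defs.

From HB Require Import structures.
From mathcomp Require Import all_boot all_order all_algebra.
From mathcomp Require Import all_classical all_reals all_analysis.
From mathcomp Require Import ring lra zify.
Set Implicit Arguments. Unset Strict Implicit. Unset Printing Implicit Defensive.
Import Order.TTheory GRing.Theory Num.Theory.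
Local Open Scope ring_scope.

(* On the atoms a function is an N-periodic sequence u, and after a summation
   by parts the energy form becomes the quadratic form of the discrete
   Laplacian N^2 (u (k+1) - 2 u k + u (k-1)).  Its periodic eigensequences
   are the waves cos (2 pi k l / N - phi), with eigenvalue lambda_l.  Each f_l
   is a step function (hence in D^1_mu) sampling such a wave, so it is an
   eigenfunction.  Conversely, testing an eigenfunction of eigenvalue lam
   against step functions sampling the waves shows that its samples are
   orthogonal to every wave of eigenvalue other than lam; if lam were none of
   the lambda_l, discrete Fourier inversion would make all samples vanish. *)

Section PeriodicSequences.
Variables (R : realType) (N : nat).
Hypothesis N_gt0 : (0 < N)%N.

Let N_neq0 : N%:R != 0 :> R. Proof. by rewrite pnatr_eq0 -lt0n. Qed.

Definition periodic_seq (u : nat -> R) : Prop := forall k, u (k + N)%N = u k.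

Lemma periodic_seq_mod u : periodic_seq u -> forall k, u (k %% N)%N = u k.
Proof.
move=> uN k; rewrite {2}(divn_eq k N) addnC.
by elim: (k %/ N)%N => [|q IH]; rewrite ?muln0 ?mul0n ?addn0 // mulSnr addnA uN.
Qed.

Lemma sum_periodic_shift u : periodic_seq u ->
  \sum_(0 <= k < N) u k.+1 = \sum_(0 <= k < N) u k.
Proof.
move=> uN; rewrite -(prednK N_gt0) big_nat_recr // big_nat_recl //= (prednK N_gt0).
by rewrite -[u 0%N](uN 0%N) add0n addrC.
Qed.

Lemma sum_by_parts_periodic u v : periodic_seq u -> periodic_seq v ->
  \sum_(0 <= k < N) (u k.+1 - u k) * (v k.+1 - v k) =
  - \sum_(0 <= k < N) (u k.+2 - 2 * u k.+1 + u k) * v k.+1.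
Proof.
move=> uN vN.
have shifted : \sum_(0 <= k < N) (u k.+1 - u k) * v k =
               \sum_(0 <= k < N) (u k.+2 - u k.+1) * v k.+1.
  by rewrite (@sum_periodic_shift (fun k => (u k.+1 - u k) * v k)) // => k;
     rewrite /= -!addSn !uN vN.
rewrite -sumrN; under eq_bigr do rewrite mulrBr.
rewrite sumrB shifted -sumrB; apply: eq_bigr => k _; ring.
Qed.

(* The second difference is centred at [k.+1] so that no index underflows;
   for a periodic [u] this covers every point. *)
Definition laplace_eigenseq (u : nat -> R) (mu : R) : Prop :=
  periodic_seq u /\ forall k, N%:R ^+ 2 * (u k.+2 - 2 * u k.+1 + u k) = mu * u k.+1.

Definition freq (l : nat) : R := 2 * pi * l%:R / N%:R.

Lemma cos_second_difference (x t : R) :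
  cos (x + t) - 2 * cos x + cos (x - t) = (2 * cos t - 2) * cos x.
Proof. by rewrite cosD cosB; ring. Qed.

Definition wave (l : nat) (phi : R) (k : nat) : R := cos (k%:R * freq l - phi).

Lemma wave_eigenseq l phi : laplace_eigenseq (wave l phi) (lambda R N l).
Proof.
split=> [k | k]; rewrite /wave.
  have -> : (k + N)%N%:R * freq l - phi = k%:R * freq l - phi + (pi *+ 2) *+ l.
    by rewrite natrD /freq -mulr_natr; field.
  exact: periodicn (@cosD2pi R) _ _.
have -> : k.+2%:R * freq l - phi = k.+1%:R * freq l - phi + freq l.
  by rewrite -addn1 natrD; ring.
have -> : k%:R * freq l - phi = k.+1%:R * freq l - phi - freq l.
  by rewrite -addn1 natrD; ring.
by rewrite cos_second_difference /lambda; ring.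
Qed.

Lemma sin_mul_sum_cos (y : R) n :
  2 * sin y * \sum_(0 <= l < n) cos (l%:R * (2 * y)) = sin ((2 * n%:R - 1) * y) + sin y.
Proof.
elim: n => [|n IH]; first by rewrite big_geq // !mulr0 sub0r mulN1r sinN addNr.
rewrite big_nat_recr //= mulrDr IH.
have -> : (2 * n%:R - 1) * y = n%:R * (2 * y) - y by ring.
have -> : (2 * n.+1%:R - 1) * y = n%:R * (2 * y) + y by rewrite -addn1 natrD; ring.
by rewrite sinB sinD; ring.
Qed.

Lemma sum_cos_freq d : (0 < d < N)%N -> \sum_(0 <= l < N) cos (l%:R * freq d) = 0.
Proof.
case/andP=> d_gt0 dN; pose y : R := pi * d%:R / N%:R.
have sin_y_gt0 : 0 < sin y.
  apply: sin_gt0_pi; rewrite divr_gt0 ?mulr_gt0 ?pi_gt0 ?ltr0n //=.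
  by rewrite ltr_pdivrMr ?ltr0n // ltr_pM2l ?pi_gt0 ?ltr_nat.
have := sin_mul_sum_cos y N.
have -> : (2 * N%:R - 1) * y = - y + (pi *+ 2) *+ d by rewrite /y -mulr_natr; field.
rewrite periodicn ?sinN ?addNr; last exact: sinD2pi.
have -> : 2 * y = freq d by rewrite /y /freq; ring.
have two_sin_y_neq0 : 2 * sin y != 0 by apply: lt0r_neq0; lra.
by move/eqP; rewrite mulf_eq0 (negbTE two_sin_y_neq0) => /eqP.
Qed.

Lemma sum_wave_kernel k m : (k < N)%N -> (m < N)%N ->
  \sum_(0 <= l < N) wave l (m%:R * freq l) k = if k == m then N%:R else 0.
Proof.
rewrite /wave => kN mN; case: ltngtP => [km | mk | ->].
- rewrite -[RHS](@sum_cos_freq (m - k)); last lia.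
  apply: eq_bigr => l _; rewrite -cosN /freq natrB; [congr cos; ring | exact: ltnW].
- rewrite -[RHS](@sum_cos_freq (k - m)); last lia.
  apply: eq_bigr => l _; rewrite /freq natrB; [congr cos; ring | exact: ltnW].
- under eq_bigr do rewrite subrr cos0.
  by rewrite sumr_const_nat subn0.
Qed.

Lemma wave_orthogonal_eq0 u :
  (forall l phi, (l < N)%N -> \sum_(0 <= k < N) u k * wave l phi k = 0) ->
  forall m, (m < N)%N -> u m = 0.
Proof.
move=> u_perp m mN; have : \sum_(0 <= k < N) u k * \sum_(0 <= l < N) wave l (m%:R * freq l) k = 0.
  under eq_bigr do rewrite mulr_sumr; rewrite exchange_big /=.
  by rewrite big_nat_cond big1 // => l /andP[/andP[_ lN] _]; exact: u_perp.
rewrite (eq_big_nat _ _ (F2 := fun k => if k == m then u k * N%:R else 0)); last first.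
  by move=> k /andP[_ kN]; rewrite sum_wave_kernel //; case: eqP; rewrite ?mulr0.
rewrite -big_mkcond big_nat1_eq /= mN => /eqP.
by rewrite mulf_eq0 (negbTE N_neq0) orbF => /eqP.
Qed.

(* [f_l] takes the value [Im e^(i j y) = cos (j y - pi / 2)] or
   [Re e^(i j y) = cos (j y)] on [(z j, z j.+1]], where [y = 2 pi l / N]. *)
Definition phase (l : nat) : R := if (0 < l)%N && (2 * l < N)%N then pi / 2 else 0.

Lemma wave_phase_neq0 l : exists2 m, (m < N)%N & wave l (phase l) m != 0.
Proof.
rewrite /phase /wave; case: ifP => [/andP[l_gt0 two_l_ltN] | _].
  exists 1%N; first lia.
  rewrite mul1r cosBpihalf; apply/lt0r_neq0/sin_gt0_pi; rewrite /freq.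
  have pi_pos := @pi_gt0 R; have l_pos : (0 : R) < l%:R by rewrite ltr0n.
  have : 2 * l%:R < N%:R :> R by rewrite -natrM ltr_nat.
  rewrite ltr_pdivrMr ?ltr0n // divr_gt0 ?mulr_gt0 ?ltr0n //=; nra.
by exists 0%N; rewrite // mul0r subr0 cos0 oner_neq0.
Qed.

End PeriodicSequences.

Section Atoms.
Variables (R : realType) (N : nat) (z : nat -> R).
Hypothesis N_gt0 : (0 < N)%N.
Hypothesis z_incr : forall i, (1 <= i < N)%N -> z i < z i.+1.
Hypotheses (z1_ge0 : 0 <= z 1%N) (zN_lt1 : z N < 1).

Let N_neq0 : N%:R != 0 :> R. Proof. by rewrite pnatr_eq0 -lt0n. Qed.

Let atom := [pred i : nat | (0 < i <= N)%N].

Let N_atom : atom N. Proof. by rewrite /= N_gt0 leqnn. Qed.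

Let one_atom : atom 1%N. Proof. by rewrite /= N_gt0. Qed.

Let z_leq_mono : {in atom &, {mono z : i j / (i <= j)%N >-> i <= j}}.
Proof.
apply: Order.NatMonotonyTheory.incn_inP => [i j /andP[i_gt0 _] /andP[_ jN] k /andP[ik kj]|].
  by rewrite inE; lia.
by move=> i /andP[i_gt0 _] /andP[_ iN]; apply: z_incr; lia.
Qed.

Let z_in01 i : atom i -> 0 <= z i <= 1.
Proof.
move=> i_atom.
rewrite (le_trans z1_ge0) ?z_leq_mono //=; last by case/andP: i_atom.
by rewrite ltW // (le_lt_trans _ zN_lt1) // z_leq_mono //; case/andP: i_atom.
Qed.

Definition sample (f : R -> R) (k : nat) : R := f (z (k %% N)%N.+1).

Lemma sample_periodic f : periodic_seq N (sample f).
Proof. by move=> k; rewrite /sample modnDr. Qed.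

Lemma sample_atom f k : (k < N)%N -> sample f k = f (z k.+1).
Proof. by move=> kN; rewrite /sample modn_small. Qed.

Definition last_below (x : R) : nat := \max_(1 <= i < N.+1 | z i < x) i.

(* The function equal to [w j] on [(z j, z j.+1]] and to [w 0] on
   [[0, z 1] \/ (z N, 1]]. *)
Definition stepf (w : nat -> R) (x : R) : R := w (last_below x %% N)%N.

Lemma last_below_leq x : (last_below x <= N)%N.
Proof. by apply/bigmax_leqP_seq => i; rewrite mem_index_iota ltnS => /andP[]. Qed.

Lemma last_belowP x i : atom i -> (z i < x) = (i <= last_below x)%N.
Proof.
move=> i_atom; apply/idP/idP => [zi_lt_x | i_le].
  by apply: (leq_bigmax_seq i); rewrite // mem_index_iota ltnS.
rewrite ltNge; apply: contraTN i_le => x_le_zi; rewrite -ltnNge.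
have i_gt0 : (0 < i)%N by case/andP: i_atom.
rewrite -(prednK i_gt0) ltnS; apply/bigmax_leqP_seq => k.
rewrite mem_index_iota ltnS => k_atom zk_lt_x; rewrite -ltnS (prednK i_gt0) ltnNge.
by rewrite -z_leq_mono // -ltNge (lt_le_trans zk_lt_x x_le_zi).
Qed.

Lemma last_below0 : last_below 0 = 0%N.
Proof.
apply/eqP; rewrite -leqn0; apply/bigmax_leqP_seq => i.
by rewrite mem_index_iota ltnS => /z_in01 /andP[zi_ge0 _]; rewrite ltNge zi_ge0.
Qed.

Lemma last_below1 : last_below 1 = N.
Proof.
by apply/eqP; rewrite eqn_leq last_below_leq -(last_belowP 1 N_atom).
Qed.

Lemma last_below_atom i : (i < N)%N -> last_below (z i.+1) = i.
Proof.
move=> iN; apply/eqP; rewrite eqn_leq -ltnS ltnNge -last_belowP ?inE // ltxx.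
case: i iN => // i iN; rewrite -last_belowP ?inE; last lia.
by apply: z_incr; lia.
Qed.

Lemma stepf_atom w i : (i < N)%N -> stepf w (z i.+1) = w i.
Proof. by move=> iN; rewrite /stepf last_below_atom // modn_small. Qed.

Lemma sample_stepf w : periodic_seq N w -> sample (stepf w) =1 w.
Proof.
by move=> w_per k; rewrite /sample stepf_atom ?ltn_pmod // periodic_seq_mod.
Qed.

Lemma sum_below x (F : nat -> R) :
  \sum_(1 <= i < N.+1) (if z i < x then F i else 0) =
  \sum_(1 <= i < (last_below x).+1) F i.
Proof.
rewrite -big_mkcond.
rewrite [RHS](@big_nat_widen _ _ _ 1 (last_below x).+1 N.+1) ?ltnS ?last_below_leq //.
rewrite big_nat_cond [RHS]big_nat_cond; apply: eq_bigl => i.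
by case: (boolP (1 <= i < N.+1)%N) => //= i_atom; rewrite last_belowP.
Qed.

Lemma stepf_D1mu f w : (forall x, 0 <= x <= 1 -> f x = stepf w x) -> D1mu N z f.
Proof.
move=> f_step; have f0 : f 0 = w 0%N by rewrite f_step ?lexx ?ler01 // /stepf last_below0 mod0n.
pose W k := w (k %% N)%N.
exists (stepf (fun k => N%:R * (W k.+1 - W k))); split.
  by rewrite f0 f_step ?lexx ?ler01 // /stepf last_below1 modnn.
move=> x x01; rewrite f0 f_step //.
transitivity (w 0%N + \sum_(1 <= i < N.+1)
                (if z i < x then alpha R N * stepf (fun k => N%:R * (W k.+1 - W k)) (z i) else 0)).
  rewrite sum_below big_add1 /=.
  rewrite (eq_big_nat _ _ (F2 := fun k => W k.+1 - W k)); last first.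
    move=> k /andP[_ k_lt]; rewrite stepf_atom /alpha ?mulKf //.
    exact: leq_trans k_lt (last_below_leq x).
  by rewrite telescope_sumr // /W mod0n addrC subrK.
congr (_ + _); apply: eq_big_nat => i i_atom.
by rewrite (andP (z_in01 i_atom)).1; case: ifP; rewrite ?mulr0.
Qed.

Lemma energyC f g : energy N z f g = energy N z g f.
Proof. by apply: eq_bigr => n _; rewrite mulrAC. Qed.

Lemma gradmu_sample f k : (k < N)%N ->
  gradmu N z f k.+1 = N%:R * (sample f k.+1 - sample f k).
Proof.
move=> kN; rewrite /gradmu /alpha invrK mulrC (sample_atom f kN).
case: ltnP => [SkN | NSk]; first by rewrite sample_atom.
have SkE : k.+1 = N by apply/eqP; rewrite eqn_leq kN NSk.
by rewrite SkE /sample modnn mulrC.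
Qed.

Lemma energy_sample f g : energy N z f g =
  N%:R * \sum_(0 <= k < N) (sample f k.+1 - sample f k) * (sample g k.+1 - sample g k).
Proof.
rewrite /energy big_add1 /= mulr_sumr; apply: eq_big_nat => k /andP[_ kN].
by rewrite !gradmu_sample // /alpha; field.
Qed.

Lemma energy_by_parts f g : energy N z f g =
  - (N%:R^-1 * \sum_(0 <= k < N)
       N%:R ^+ 2 * (sample f k.+2 - 2 * sample f k.+1 + sample f k) * sample g k.+1).
Proof.
rewrite energy_sample (sum_by_parts_periodic N_gt0 (sample_periodic f) (sample_periodic g)).
rewrite mulrN !mulr_sumr.
by congr (- _); apply: eq_bigr => k _; field.
Qed.

Lemma ipmu_sample h g : ipmu N z h g = N%:R^-1 * \sum_(0 <= k < N) sample h k * sample g k.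
Proof.
rewrite /ipmu big_add1 /= mulr_sumr; apply: eq_big_nat => k /andP[_ kN].
by rewrite !sample_atom // mulrA.
Qed.

Lemma energy_eigenseq f lam : laplace_eigenseq N (sample f) lam ->
  forall g, energy N z f g = - ipmu N z (fun x => lam * f x) g.
Proof.
case=> _ f_eigen g; rewrite energy_by_parts ipmu_sample.
rewrite -(@sum_periodic_shift _ _ N_gt0 (fun k => lam * sample f k * sample g k)); last first.
  by move=> k; rewrite !sample_periodic.
by under eq_bigr do rewrite f_eigen.
Qed.

Lemma stepf_eigenfunction f w lam :
  (forall x, 0 <= x <= 1 -> f x = stepf w x) -> laplace_eigenseq N w lam ->
  (exists2 m, (m < N)%N & w m != 0) -> eigenfunction N z f lam.
Proof.
move=> f_step [w_per w_eigen] [m mN wm_neq0].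
have sample_f k : sample f k = w k.
  by rewrite -(sample_stepf w_per) /sample f_step // z_in01 // inE ltn_pmod.
split; first split.
- exact: stepf_D1mu f_step.
- move=> g _; apply: energy_eigenseq; split; first exact: sample_periodic.
  by move=> k; rewrite !sample_f.
- by exists m.+1; rewrite ?ltnS // -sample_atom // sample_f.
Qed.

Lemma eigenfunction_orthogonal f lam w mu :
  (forall g, D1mu N z g -> energy N z f g = - ipmu N z (fun x => lam * f x) g) ->
  laplace_eigenseq N w mu -> mu != lam ->
  \sum_(0 <= k < N) sample f k * w k = 0.
Proof.
move=> f_lap [w_per w_eigen] mu_neq_lam.
set S := \sum_(0 <= k < N) sample f k * w k.
have energy_S : energy N z (stepf w) f = - (N%:R^-1 * (mu * S)).
  rewrite energy_by_parts /S mulr_sumr.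
  rewrite -(@sum_periodic_shift _ _ N_gt0 (fun k => mu * (sample f k * w k))); last first.
    by move=> k; rewrite sample_periodic w_per.
  by congr (- (_ * _)); apply: eq_bigr => k _; rewrite !sample_stepf // w_eigen; ring.
have ipmu_S : ipmu N z (fun x => lam * f x) (stepf w) = N%:R^-1 * (lam * S).
  rewrite ipmu_sample /S mulr_sumr; congr (_ * _); apply: eq_bigr => k _.
  by rewrite sample_stepf // mulrA.
move: (f_lap _ (stepf_D1mu (fun x _ => erefl (stepf w x)))).
rewrite energyC energy_S ipmu_S => /oppr_inj /(mulfI (invr_neq0 N_neq0)) /eqP.
by rewrite -subr_eq0 -mulrBl mulf_eq0 subr_eq0 (negbTE mu_neq_lam) => /eqP.
Qed.

Lemma stepf_of_pieces f w :
  (forall x, (0 <= x <= z 1%N) \/ (z N < x <= 1) -> f x = w 0%N) ->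
  (forall j, (1 <= j <= N.-1)%N -> forall x, z j < x <= z j.+1 -> f x = w j) ->
  forall x, 0 <= x <= 1 -> f x = stepf w x.
Proof.
move=> f_out f_in x /andP[x_ge0 x_le1]; rewrite /stepf.
have := last_below_leq x; case: (posnP (last_below x)) => [j0 _ | j_gt0].
  by rewrite j0 mod0n f_out //; left; rewrite x_ge0 leNgt (last_belowP x one_atom) j0.
rewrite leq_eqVlt => /orP[/eqP jN | jN].
  by rewrite jN modnn f_out //; right; rewrite x_le1 andbT (last_belowP x N_atom) jN.
have L_atom : atom (last_below x) by rewrite /= j_gt0 ltnW.
have SL_atom : atom (last_below x).+1 by rewrite /= jN.
rewrite modn_small // (f_in (last_below x)) //; first lia.
by rewrite (last_belowP x L_atom) leqnn leNgt (last_belowP x SL_atom) ltnn.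
Qed.

Lemma eigf_spec_stepf l f : eigf_spec N z l f ->
  forall x, 0 <= x <= 1 -> f x = stepf (wave N l (phase R N l)) x.
Proof.
rewrite /eigf_spec /phase /wave /freq; case: eqP => [-> f_one x x01 | /eqP l_neq0].
  by rewrite f_one // /stepf /= !(mulr0, mul0r) subr0 cos0.
rewrite lt0n l_neq0 /=; case: ifP => _ [f_out f_in]; apply: stepf_of_pieces.
- by move=> x /f_out ->; rewrite mul0r sub0r cosN cos_pihalf.
- move=> j j_atom x /(f_in _ j_atom) ->; rewrite cosBpihalf natrM; congr sin; ring.
- by move=> x /f_out ->; rewrite mul0r subr0 cos0.
- by move=> j j_atom x /(f_in _ j_atom) ->; rewrite subr0 natrM; congr cos; ring.
Qed.

End Atoms.

Theorem corollary4p2 (R : realType) (N : nat) (z : nat -> R) :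
  (3 <= N)%N ->
  0 <= z 1%N -> z N < 1 ->
  (forall i : nat, (1 <= i < N)%N -> z i < z i.+1) ->
  (* each lambda_l is an eigenvalue, with eigenfunction f_l *)
  (forall l : nat, (l < N)%N ->
     forall f : R -> R, eigf_spec N z l f -> eigenfunction N z f (lambda R N l)) /\
  (* and these are all the eigenvalues *)
  (forall (lam : R) (f : R -> R), eigenfunction N z f lam ->
     exists l : nat, (l < N)%N /\ lam = lambda R N l).
Proof.
move=> N_ge3 z1_ge0 zN_lt1 z_incr; have N_gt0 : (0 < N)%N by lia.
split=> [l lN f f_spec | lam f [[_ f_lap] [i [/andP[i_gt0 iN] fzi_neq0]]]].
  apply: (stepf_eigenfunction N_gt0 z_incr z1_ge0 zN_lt1
           (eigf_spec_stepf N_gt0 z_incr z1_ge0 zN_lt1 f_spec)).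
    exact: wave_eigenseq.
  exact: wave_phase_neq0.
apply: contrapT => no_l.
have lam_neq l : (l < N)%N -> lambda R N l != lam.
  by move=> lN; apply/eqP => lam_eq; apply: no_l; exists l.
have sample_f_eq0 := wave_orthogonal_eq0 N_gt0 (fun l phi lN =>
  eigenfunction_orthogonal N_gt0 z_incr z1_ge0 zN_lt1 f_lap
    (wave_eigenseq N_gt0 l phi) (lam_neq l lN)).
have fzi_eq0 : f (z i) = 0.
  have i_pred_ltN : (i.-1 < N)%N by lia.
  by rewrite -(prednK i_gt0) -(sample_atom z f i_pred_ltN) sample_f_eq0.
by rewrite fzi_eq0 eqxx in fzi_neq0.
Qed.
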